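(* Let $\lambda\in\Lambda$ (single-hop). For every $q\in\mathbb R_+^N$, $\Delta(q)$ is the unique optimal solution of the problem: minimize $L(r)$ over $r\in\mathbb R_+^N$ subject to $\xi\cdot r\ge\xi\cdot q$ for all $\xi\in\Xi^+(\lambda)$.
   Context: Single-hop network with $N$ queues and finite $\mathcal S\subset\mathbb R_+^N$; $f:\mathbb R_+\to\mathbb R_+$ differentiable, strictly increasing, $f(0)=0$; $L(q)=\sum_n\int_0^{q_n}f$. $\langle\mathcal S\rangle$ convex hull; $\Lambda=\{\lambda\in\mathbb R_+^N:\lambda\le\sigma$ for some $\sigma\in\langle\mathcal S\rangle\}$. $E$ = set of extreme points of $\{\xi\in\mathbb R_+^N:\max_{\pi\in\mathcal S}\xi\cdot\pi\le1\}$; $\mathcal S^*$ = maximal elements of $E$ (componentwise order); $\Xi(\lambda)=\{\xi\in\mathcal S^*:\xi\cdot\lambda=1\}$; $\Xi^+(\lambda)=\{\xi\in E:\xi\cdot\lambda=1\}$. Lifting map: $\Delta(q)$ is the unique minimizer of $L(r)$ over $r\in\mathbb R_+^N$ s.t. $\xi\cdot r\ge\xi\cdot q$ for all $\xi\in\Xi(\lambda)$ and $r_n\le q_n$ for all $n$ with $\lambda_n=0$. *)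

From Stdlib Require Import Reals Lra List ClassicalEpsilon.
Import ListNotations.
Open Scope R_scope.

(* Vectors of R^N are functions nat -> R; R_+^N = nonnegative on indices < N
   and (by convention) zero on indices >= N, so that equality of vectors is
   Leibniz equality. *)
Definition Rp (N : nat) (x : nat -> R) : Prop :=
  (forall n, (n < N)%nat -> 0 <= x n) /\ (forall n, (N <= n)%nat -> x n = 0).

Definition sumR (l : list R) : R := fold_right Rplus 0 l.

Definition dot (N : nat) (x y : nat -> R) : R :=
  sumR (map (fun n => x n * y n) (seq 0 N)).

Definition in_hull (N : nat) (S : list (nat -> R)) (sigma : nat -> R) : Prop :=
  exists al : list R,
    length al = length S /\ Forall (fun a => 0 <= a) al /\ sumR al = 1 /\
    forall n, (n < N)%nat ->
      sigma n = sumR (map (fun p => fst p * snd p n) (combine al S)).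

Definition in_Lambda (N : nat) (S : list (nat -> R)) (lam : nat -> R) : Prop :=
  Rp N lam /\
  exists sigma, in_hull N S sigma /\ forall n, (n < N)%nat -> lam n <= sigma n.

Definition in_P (N : nat) (S : list (nat -> R)) (xi : nat -> R) : Prop :=
  Rp N xi /\ forall pi, In pi S -> dot N xi pi <= 1.

Definition in_E (N : nat) (S : list (nat -> R)) (xi : nat -> R) : Prop :=
  in_P N S xi /\
  forall a b (t : R), in_P N S a -> in_P N S b -> 0 < t < 1 ->
    (forall n, xi n = t * a n + (1 - t) * b n) -> a = b.

Definition vle (N : nat) (x y : nat -> R) : Prop :=
  forall n, (n < N)%nat -> x n <= y n.

Definition in_Sstar (N : nat) (S : list (nat -> R)) (xi : nat -> R) : Prop :=
  in_E N S xi /\ forall eta, in_E N S eta -> vle N xi eta -> eta = xi.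

Definition in_Xi (N : nat) (S : list (nat -> R)) (lam xi : nat -> R) : Prop :=
  in_Sstar N S xi /\ dot N xi lam = 1.

Definition in_Xiplus (N : nat) (S : list (nat -> R)) (lam xi : nat -> R) : Prop :=
  in_E N S xi /\ dot N xi lam = 1.

(* Int0 f x = \int_0^x f (Riemann integral; chosen by epsilon, meaningful
   whenever f is Riemann integrable on [0,x]). *)
Definition Int0 (f : R -> R) (x : R) : R :=
  epsilon (inhabits 0)
    (fun I => exists pr : Riemann_integrable f 0 x, RiemannInt pr = I).

Definition Lfun (N : nat) (f : R -> R) (q : nat -> R) : R :=
  sumR (map (fun n => Int0 f (q n)) (seq 0 N)).

Definition unique_min (feas : (nat -> R) -> Prop) (J : (nat -> R) -> R)
  (r : nat -> R) : Prop :=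
  feas r /\ forall r', feas r' -> r' <> r -> J r < J r'.

Definition lift_feas (N : nat) (S : list (nat -> R)) (lam q r : nat -> R) : Prop :=
  Rp N r /\
  (forall xi, in_Xi N S lam xi -> dot N xi r >= dot N xi q) /\
  (forall n, (n < N)%nat -> lam n = 0 -> r n <= q n).

Definition LiftDelta (N : nat) (S : list (nat -> R)) (f : R -> R)
  (lam q : nat -> R) : nat -> R :=
  epsilon (inhabits (fun _ => 0))
    (unique_min (lift_feas N S lam q) (Lfun N f)).

Definition plus_feas (N : nat) (S : list (nat -> R)) (lam q r : nat -> R) : Prop :=
  Rp N r /\ (forall xi, in_Xiplus N S lam xi -> dot N xi r >= dot N xi q).

(* Every [xi] in [Xi^+(lam)] lies below a maximal extreme point [xi'] (extreme points
   have distinct activity patterns, so there are finitely many); as [lam] is in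
   [Lambda], [xi' . lam <= 1 = xi . lam], so [xi'] is in [Xi(lam)] and differs from
   [xi] only where [lam n = 0], where [Delta(q) n <= q n]: thus [Delta(q)] is feasible.
   Conversely, let [r] be feasible for [Xi^+(lam)] and lower it to [q] where
   [lam n = 0] and [q n < r n].  For [xi] in [Xi(lam)], zeroing [xi] on those
   coordinates gives a point of the face [{x in P | x . lam = 1}], and the minimum of
   the linear map [x . (r - q)] over that face is attained at an extreme point, which
   lies in [Xi^+(lam)]; so the lowered point is feasible for the lifting problem.
   Since [L] is strictly increasing, [L(Delta(q)) <= L(lowered r) <= L(r)], with one
   inequality strict when [r <> Delta(q)]. *)

From Stdlib Require Import Reals List Bool Lra Lia.
From Stdlib Require Import ClassicalEpsilon Classical FunctionalExtensionality.
Import ListNotations.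
Open Scope R_scope.

(** * Finite sums and dot products *)

Section SumR.
Context {X : Type}.
Implicit Types (F G : X -> R) (l : list X).

Lemma sumR_ext F G l :
  (forall x, In x l -> F x = G x) -> sumR (map F l) = sumR (map G l).
Proof. induction l as [|a l IH]; simpl; intros H; auto. rewrite H, IH; auto. Qed.

Lemma sumR_app (a b : list R) : sumR (a ++ b) = sumR a + sumR b.
Proof. induction a as [|x a IH]; simpl; [|rewrite IH]; lra. Qed.

Lemma sumR_const (c : R) l : sumR (map (fun _ => c) l) = INR (length l) * c.
Proof.
  induction l as [|a l IH]; simpl sumR; [simpl; lra|].
  change (length (a :: l)) with (S (length l)). rewrite S_INR, IH. lra.
Qed.

Lemma sumR_zero l : sumR (map (fun _ => 0) l) = 0.
Proof. rewrite sumR_const. ring. Qed.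

Lemma sumR_plus F G l :
  sumR (map (fun x => F x + G x) l) = sumR (map F l) + sumR (map G l).
Proof. induction l; simpl; lra. Qed.

Lemma sumR_minus F G l :
  sumR (map (fun x => F x - G x) l) = sumR (map F l) - sumR (map G l).
Proof. induction l; simpl; lra. Qed.

Lemma sumR_scal (a : R) F l : sumR (map (fun x => a * F x) l) = a * sumR (map F l).
Proof. induction l as [|b l IH]; simpl; [|rewrite IH]; lra. Qed.

Lemma sumR_le F G l :
  (forall x, In x l -> F x <= G x) -> sumR (map F l) <= sumR (map G l).
Proof.
  induction l as [|a l IH]; simpl; intros H; [lra|].
  pose proof (H a (or_introl eq_refl)). pose proof (IH (fun x Hx => H x (or_intror Hx))). lra.
Qed.

Lemma sumR_nonneg F l : (forall x, In x l -> 0 <= F x) -> 0 <= sumR (map F l).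
Proof. intros H. rewrite <- (sumR_zero l). apply sumR_le, H. Qed.

Lemma sumR_lt F G l x0 :
  (forall x, In x l -> F x <= G x) -> In x0 l -> F x0 < G x0 ->
  sumR (map F l) < sumR (map G l).
Proof.
  induction l as [|a l IH]; simpl; intros H Hin Hlt; [contradiction|].
  pose proof (H a (or_introl eq_refl)).
  destruct Hin as [<-|Hin].
  - pose proof (sumR_le F G l (fun x Hx => H x (or_intror Hx))). lra.
  - pose proof (IH (fun x Hx => H x (or_intror Hx)) Hin Hlt). lra.
Qed.

Lemma sumR_term_le F l x0 :
  (forall x, In x l -> 0 <= F x) -> In x0 l -> F x0 <= sumR (map F l).
Proof.
  induction l as [|a l IH]; simpl; intros H Hin; [contradiction|].
  pose proof (H a (or_introl eq_refl)).
  pose proof (sumR_nonneg F l (fun x Hx => H x (or_intror Hx))).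
  destruct Hin as [->|Hin]; [lra|].
  pose proof (IH (fun x Hx => H x (or_intror Hx)) Hin). lra.
Qed.

Lemma sumR_eq0_nonneg F l :
  (forall x, In x l -> 0 <= F x) -> sumR (map F l) = 0 -> forall x, In x l -> F x = 0.
Proof.
  intros H Hs x Hx. pose proof (sumR_term_le F l x H Hx). pose proof (H x Hx). lra.
Qed.

Lemma Rabs_sumR_le F l : Rabs (sumR (map F l)) <= sumR (map (fun x => Rabs (F x)) l).
Proof.
  induction l; simpl; [rewrite Rabs_R0; lra|].
  eapply Rle_trans; [apply Rabs_triang|lra].
Qed.
End SumR.

Section Dot.
Variable N : nat.
Implicit Types x y z : nat -> R.

Lemma dot_comm x y : dot N x y = dot N y x.
Proof. unfold dot. apply sumR_ext. intros; lra. Qed.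

Lemma dot_ext x y x' y' :
  (forall n, (n < N)%nat -> x n * y n = x' n * y' n) -> dot N x y = dot N x' y'.
Proof. intros H. unfold dot. apply sumR_ext. intros n Hn. apply in_seq in Hn. apply H; lia. Qed.

Lemma dot_linear_r x y z a b :
  dot N x (fun n => a * y n + b * z n) = a * dot N x y + b * dot N x z.
Proof. unfold dot. rewrite <- !sumR_scal, <- sumR_plus. apply sumR_ext; intros; lra. Qed.

Lemma dot_linear_l x y z a b :
  dot N (fun n => a * y n + b * z n) x = a * dot N y x + b * dot N z x.
Proof. rewrite dot_comm, dot_linear_r, !(dot_comm x). auto. Qed.

Lemma dot_scal_r x y s : dot N x (fun n => s * y n) = s * dot N x y.
Proof. unfold dot. rewrite <- sumR_scal. apply sumR_ext. intros; lra. Qed.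

Lemma dot_plus_scal_r x y z s : dot N x (fun n => y n + s * z n) = dot N x y + s * dot N x z.
Proof.
  rewrite <- (Rmult_1_l (dot N x y)), <- dot_linear_r. apply dot_ext. intros; lra.
Qed.

Lemma dot_minus_r x y z : dot N x (fun n => y n - z n) = dot N x y - dot N x z.
Proof. unfold dot. rewrite <- sumR_minus. apply sumR_ext; intros; lra. Qed.

Lemma dot_le x y z :
  (forall n, (n < N)%nat -> x n * y n <= x n * z n) -> dot N x y <= dot N x z.
Proof. intros H. unfold dot. apply sumR_le. intros n Hn. apply in_seq in Hn. apply H; lia. Qed.

Lemma dot_coord_l (n : nat) (c : R) x : (n < N)%nat ->
  dot N (fun m => if Nat.eqb m n then c else 0) x = c * x n.
Proof.
  intros Hn. unfold dot. induction N as [|M IH]; [lia|].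
  rewrite seq_S, map_app, sumR_app. simpl.
  destruct (Nat.eq_dec n M) as [<-|ne].
  - rewrite Nat.eqb_refl, (sumR_ext _ (fun _ => 0)), sumR_zero; [lra|].
    intros m Hm. apply in_seq in Hm. destruct (Nat.eqb_spec m n); [lia|lra].
  - rewrite IH by lia. destruct (Nat.eqb_spec M n); [lia|lra].
Qed.

Lemma dot_sumR_r x (l : list (R * (nat -> R))) :
  dot N x (fun n => sumR (map (fun p => fst p * snd p n) l)) =
  sumR (map (fun p => fst p * dot N x (snd p)) l).
Proof.
  induction l as [|a l IH]; simpl.
  - unfold dot. rewrite (sumR_ext _ (fun _ => 0)), sumR_zero; [auto|intros; lra].
  - rewrite <- IH, <- (Rmult_1_l (dot N x (fun n => sumR _))), <- dot_linear_r.
    apply dot_ext. intros; lra.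
Qed.

Lemma Rabs_dot_le x y eps : (forall n, (n < N)%nat -> Rabs (y n) < eps) ->
  Rabs (dot N x y) <= sumR (map (fun n => Rabs (x n)) (seq 0 N)) * eps.
Proof.
  intros H. unfold dot. eapply Rle_trans; [apply Rabs_sumR_le|].
  rewrite Rmult_comm, <- sumR_scal. apply sumR_le. intros n Hn. apply in_seq in Hn.
  rewrite Rabs_mult. pose proof (H n ltac:(lia)). pose proof (Rabs_pos (x n)). nra.
Qed.
End Dot.

Section Vectors.
Variable N : nat.

Lemma Rp_ext (x y : nat -> R) : Rp N x -> Rp N y ->
  (forall n, (n < N)%nat -> x n = y n) -> x = y.
Proof.
  intros [_ Hx] [_ Hy] H. apply functional_extensionality. intros n.
  destruct (Nat.lt_ge_cases n N); [auto|rewrite Hx, Hy; auto].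
Qed.

Lemma Rp_neq_coord (x y : nat -> R) : Rp N x -> Rp N y -> x <> y ->
  exists n, (n < N)%nat /\ x n <> y n.
Proof.
  intros Hx Hy Hne. apply NNPP. intros Hc. apply Hne, (Rp_ext x y Hx Hy).
  intros n Hn. apply NNPP. eauto.
Qed.

Definition midpoint (x y : nat -> R) : nat -> R := fun n => (x n + y n) / 2.

Lemma Rp_midpoint x y : Rp N x -> Rp N y -> Rp N (midpoint x y).
Proof.
  intros [Hx Hx'] [Hy Hy']. unfold midpoint. split; intros n Hn.
  - pose proof (Hx n Hn). pose proof (Hy n Hn). lra.
  - rewrite Hx', Hy'; auto. lra.
Qed.

Lemma vle_refl x : vle N x x.
Proof. intros n _. lra. Qed.

Lemma vle_trans x y z : vle N x y -> vle N y z -> vle N x z.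
Proof. intros H1 H2 n Hn. specialize (H1 n Hn). specialize (H2 n Hn). lra. Qed.
End Vectors.

Section Lists.
Context {X : Type}.

Lemma length_filter_le (P Q : X -> bool) l : (forall x, In x l -> Q x = true -> P x = true) ->
  (length (filter Q l) <= length (filter P l))%nat.
Proof.
  induction l as [|a l IH]; simpl; intros H; [lia|].
  pose proof (IH (fun x Hx => H x (or_intror Hx))).
  destruct (Q a) eqn:E; [rewrite (H a (or_introl eq_refl) E); simpl; lia|].
  destruct (P a); simpl; lia.
Qed.

Lemma length_filter_lt (P Q : X -> bool) l x0 : (forall x, In x l -> Q x = true -> P x = true) ->
  In x0 l -> P x0 = true -> Q x0 = false -> (length (filter Q l) < length (filter P l))%nat.
Proof.
  induction l as [|a l IH]; simpl; intros H Hin HP HQ; [contradiction|].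
  destruct Hin as [->|Hin].
  - rewrite HP, HQ. simpl. pose proof (length_filter_le P Q l (fun x Hx => H x (or_intror Hx))). lia.
  - pose proof (IH (fun x Hx => H x (or_intror Hx)) Hin HP HQ).
    destruct (Q a) eqn:E; [rewrite (H a (or_introl eq_refl) E); simpl; lia|].
    destruct (P a); simpl; lia.
Qed.

Lemma list_argmin (l : list X) (P : X -> Prop) (g : X -> R) : (exists x, In x l /\ P x) ->
  exists x0, In x0 l /\ P x0 /\ forall x, In x l -> P x -> g x0 <= g x.
Proof.
  induction l as [|a l IH]; intros [x [Hx HP]]; [contradiction|].
  destruct (classic (exists x, In x l /\ P x)) as [Hl|Hl].
  - destruct (IH Hl) as [x0 [Hx0 [HP0 Hmin]]].
    destruct (classic (P a /\ g a <= g x0)) as [[Ha Hg]|Hn].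
    + exists a. split; [left; auto|split; auto]. intros y [<-|Hy] HPy; [lra|].
      specialize (Hmin y Hy HPy). lra.
    + exists x0. split; [right; auto|split; auto]. intros y [->|Hy] HPy; auto.
      apply Rnot_lt_le. intros Hlt. apply Hn. split; auto. lra.
  - destruct Hx as [->|Hx]; [|exfalso; apply Hl; eauto].
    exists x. split; [left; auto|split; auto]. intros y [<-|Hy] HPy; [lra|exfalso; apply Hl; eauto].
Qed.

Lemma exists_pos_scale_le (l : list X) (g h : X -> R) :
  exists s, 0 < s /\ forall x, In x l -> 0 < h x -> s * g x <= h x.
Proof.
  induction l as [|a l [s [Hs H]]]; [exists 1; split; [lra|intros; contradiction]|].
  destruct (Rlt_dec 0 (h a)) as [Ha|Ha]; [destruct (Rlt_dec 0 (g a)) as [Hg|Hg]|].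
  - assert (Has : 0 < h a / g a) by (apply Rdiv_lt_0_compat; auto).
    assert (Hmin : 0 < Rmin s (h a / g a)) by (apply Rmin_pos; auto).
    exists (Rmin s (h a / g a)). split; auto.
    pose proof (Rmin_l s (h a / g a)) as Hmin_l. pose proof (Rmin_r s (h a / g a)) as Hmin_r.
    intros x [->|Hx] Hh.
    + apply Rle_trans with (h x / g x * g x); [apply Rmult_le_compat_r; lra|right; field; lra].
    + pose proof (H x Hx Hh). destruct (Rle_dec 0 (g x)) as [Hgx|Hgx].
      * pose proof (Rmult_le_compat_r (g x) _ _ Hgx Hmin_l). lra.
      * apply Rnot_le_lt in Hgx. nra.
  - exists s. split; auto. intros x [<-|Hx] Hh; auto. nra.
  - exists s. split; auto. intros x [<-|Hx] Hh; auto. lra.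
Qed.
End Lists.

Fixpoint bool_lists (k : nat) : list (list bool) :=
  match k with
  | O => [[]]
  | S k' => map (cons true) (bool_lists k') ++ map (cons false) (bool_lists k')
  end.

Lemma in_bool_lists (p : list bool) : In p (bool_lists (length p)).
Proof.
  induction p as [|b p IH]; simpl; auto.
  apply in_or_app. destruct b; [left|right]; apply in_map; auto.
Qed.

Definition bool_of_prop (P : Prop) : bool := if excluded_middle_informative P then true else false.

Lemma bool_of_prop_true (P : Prop) : bool_of_prop P = true <-> P.
Proof. unfold bool_of_prop. destruct (excluded_middle_informative P); split; auto; congruence. Qed.

Lemma bool_of_prop_false (P : Prop) : bool_of_prop P = false <-> ~ P.
Proof. unfold bool_of_prop. destruct (excluded_middle_informative P); split; auto; congruence. Qed.

(** * Subsequences *)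

Definition strict_incr (phi : nat -> nat) : Prop := forall k, (phi k < phi (S k))%nat.

Lemma strict_incr_ge phi : strict_incr phi -> forall k, (k <= phi k)%nat.
Proof. intros H k. induction k; [lia|]. specialize (H k). lia. Qed.

Lemma strict_incr_le phi : strict_incr phi -> forall k k', (k <= k')%nat -> (phi k <= phi k')%nat.
Proof. intros H k k' Hk. induction Hk; [lia|]. specialize (H m). lia. Qed.

Lemma strict_incr_comp phi psi : strict_incr phi -> strict_incr psi ->
  strict_incr (fun k => phi (psi k)).
Proof.
  intros H1 H2 k. pose proof (strict_incr_le phi H1 _ _ (H2 k)). specialize (H1 (psi k)). lia.
Qed.

Lemma Un_cv_subseq v l phi : Un_cv v l -> strict_incr phi -> Un_cv (fun k => v (phi k)) l.
Proof.
  intros H Hp eps He. destruct (H eps He) as [K HK]. exists K. intros k Hk.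
  apply HK. pose proof (strict_incr_ge phi Hp k). lia.
Qed.

Lemma Un_cv_bounds v l a b : Un_cv v l -> (forall k, a <= v k <= b) -> a <= l <= b.
Proof.
  intros H Hb. split; apply Rnot_lt_le; intros Hc;
  [destruct (H (a - l) ltac:(lra)) as [K HK]|destruct (H (l - b) ltac:(lra)) as [K HK]];
  specialize (HK K (le_n _)); specialize (Hb K); unfold Rdist in HK; apply Rabs_def2 in HK; lra.
Qed.

Lemma inv_INR_lt eps : 0 < eps -> exists K : nat, forall k, (K <= k)%nat -> / (INR k + 1) < eps.
Proof.
  intros He. destruct (archimed_cor1 eps He) as [K [HK HK0]]. exists K. intros k Hk.
  apply le_INR in Hk. pose proof (lt_0_INR K HK0).
  eapply Rle_lt_trans; [|exact HK]. apply Rinv_le_contravar; lra.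
Qed.

Lemma ValAdh_subseq w l : ValAdh w l -> exists psi, strict_incr psi /\ Un_cv (fun k => w (psi k)) l.
Proof.
  intros H.
  assert (G : forall k M : nat, {p : nat | (M <= p)%nat /\ Rabs (w p - l) < / (INR k + 1)}).
  { intros k M. apply constructive_indefinite_description.
    assert (Hp : 0 < / (INR k + 1)) by (apply Rinv_0_lt_compat; pose proof (pos_INR k); lra).
    destruct (H (disc l (mkposreal _ Hp)) M) as [p [Hp1 Hp2]].
    - exists (mkposreal _ Hp). intros y Hy. exact Hy.
    - exists p. auto. }
  pose (psi := fix psi k := match k with
                | O => proj1_sig (G O O)
                | S k' => proj1_sig (G (S k') (S (psi k'))) end).
  assert (Hpsi : forall k, Rabs (w (psi k) - l) < / (INR k + 1)).
  { intros [|k]; exact (proj2 (proj2_sig (G _ _))). }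
  exists psi. split.
  - intros k. exact (proj1 (proj2_sig (G (S k) (S (psi k))))).
  - intros eps He. destruct (inv_INR_lt eps He) as [K HK]. exists K. intros k Hk.
    eapply Rlt_trans; [apply Hpsi|auto].
Qed.

Lemma Un_cv_coords_subseq (u : nat -> nat -> R) M : (forall k n, 0 <= u k n <= M) ->
  forall j, exists phi lim, strict_incr phi /\
    forall n, (n < j)%nat -> Un_cv (fun k => u (phi k) n) (lim n).
Proof.
  intros Hb j. induction j as [|j [phi [lim [Hp Hc]]]].
  - exists (fun k => k), (fun _ => 0). split; [intros k; lia|intros; lia].
  - destruct (Bolzano_Weierstrass (fun k => u (phi k) j) (fun c => 0 <= c <= M)
      (compact_P3 0 M) (fun k => Hb (phi k) j)) as [l Hl].
    destruct (ValAdh_subseq _ _ Hl) as [psi [Hpsi Hcv]].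
    exists (fun k => phi (psi k)), (fun n => if Nat.eqb n j then l else lim n).
    split; [apply strict_incr_comp; auto|].
    intros n Hn. destruct (Nat.eqb_spec n j) as [->|ne]; auto.
    apply (Un_cv_subseq (fun k => u (phi k) n)); auto. apply Hc; lia.
Qed.

Lemma Un_cv_coords_uniform j (v : nat -> nat -> R) l :
  (forall n, (n < j)%nat -> Un_cv (fun k => v k n) (l n)) ->
  forall eps, 0 < eps -> exists K, forall k, (K <= k)%nat ->
    forall n, (n < j)%nat -> Rabs (v k n - l n) < eps.
Proof.
  induction j as [|j IH]; intros H eps He; [exists O; intros; lia|].
  destruct (IH (fun n Hn => H n ltac:(lia)) eps He) as [K1 HK1].
  destruct (H j ltac:(lia) eps He) as [K2 HK2].
  exists (Nat.max K1 K2). intros k Hk n Hn.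
  destruct (Nat.eq_dec n j) as [->|ne]; [apply HK2|apply HK1]; lia.
Qed.

(** * The objective [L] and its minimizers *)

Section Objective.
Variable f : R -> R.
Hypothesis Hf_der : forall x, 0 <= x -> derivable_pt f x.
Hypothesis Hf_inc : forall x y, 0 <= x -> x < y -> f x < f y.
Hypothesis Hf0 : f 0 = 0.

Lemma f_le x y : 0 <= x -> x <= y -> f x <= f y.
Proof. intros. destruct (Req_dec x y) as [->|]; [lra|]. left. apply Hf_inc; lra. Qed.

Lemma f_nonneg x : 0 <= x -> 0 <= f x.
Proof. intros. rewrite <- Hf0. apply f_le; lra. Qed.

Lemma f_integrable a b : 0 <= a -> a <= b -> Riemann_integrable f a b.
Proof.
  intros. apply continuity_implies_RiemannInt; auto.
  intros x Hx. apply derivable_continuous_pt, Hf_der. lra.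
Qed.

Lemma Int0_RiemannInt x (pr : Riemann_integrable f 0 x) : Int0 f x = RiemannInt pr.
Proof.
  unfold Int0.
  destruct (epsilon_spec (inhabits 0)
    (fun I => exists pr : Riemann_integrable f 0 x, RiemannInt pr = I)
    (ex_intro _ _ (ex_intro _ pr eq_refl))) as [pr' <-].
  apply RiemannInt_P5.
Qed.

Lemma Int0_diff x y (Hx : 0 <= x) (Hxy : x <= y) :
  Int0 f y - Int0 f x = RiemannInt (f_integrable x y Hx Hxy).
Proof.
  rewrite (Int0_RiemannInt y (f_integrable 0 y ltac:(lra) ltac:(lra))).
  rewrite (Int0_RiemannInt x (f_integrable 0 x ltac:(lra) ltac:(lra))).
  rewrite <- (RiemannInt_P26 (f_integrable 0 x ltac:(lra) ltac:(lra)) (f_integrable x y Hx Hxy)).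
  lra.
Qed.

Lemma Int0_0 : Int0 f 0 = 0.
Proof. rewrite (Int0_RiemannInt 0 (f_integrable 0 0 (Rle_refl _) (Rle_refl _))). apply RiemannInt_P9. Qed.

Lemma Int0_diff_bounds x y : 0 <= x -> x <= y ->
  f x * (y - x) <= Int0 f y - Int0 f x <= f y * (y - x).
Proof.
  intros Hx Hxy. rewrite (Int0_diff x y Hx Hxy). apply RiemannInt_const_bound; auto.
  intros t Ht. split; apply f_le; lra.
Qed.

(* Bounding the integral over both halves of [x, y] makes the bounds strict. *)
Lemma Int0_diff_bounds_strict x y : 0 <= x -> x < y ->
  f x * (y - x) < Int0 f y - Int0 f x < f y * (y - x).
Proof.
  intros. set (m := (x + y) / 2).
  pose proof (Int0_diff_bounds x m ltac:(lra) ltac:(unfold m; lra)).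
  pose proof (Int0_diff_bounds m y ltac:(unfold m; lra) ltac:(unfold m; lra)).
  pose proof (Hf_inc x m ltac:(lra) ltac:(unfold m; lra)).
  pose proof (Hf_inc m y ltac:(unfold m; lra) ltac:(unfold m; lra)).
  assert (0 < m - x) by (unfold m; lra). assert (0 < y - m) by (unfold m; lra).
  split; nra.
Qed.

Lemma Int0_subgrad_strict x y : 0 <= x -> 0 <= y -> x <> y ->
  f x * (y - x) < Int0 f y - Int0 f x.
Proof.
  intros. destruct (Rtotal_order x y) as [|[->|]]; [|lra|].
  - pose proof (Int0_diff_bounds_strict x y); lra.
  - pose proof (Int0_diff_bounds_strict y x); lra.
Qed.

Lemma Int0_subgrad x y : 0 <= x -> 0 <= y -> f x * (y - x) <= Int0 f y - Int0 f x.
Proof.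
  intros. destruct (Req_dec x y) as [->|]; [lra|].
  left. apply Int0_subgrad_strict; auto.
Qed.

Lemma Int0_nonneg x : 0 <= x -> 0 <= Int0 f x.
Proof. intros Hx. pose proof (Int0_subgrad 0 x ltac:(lra) Hx) as H. rewrite Int0_0, Hf0 in H. lra. Qed.

Lemma Int0_ge_linear x : 0 <= x -> f 1 * (x - 1) <= Int0 f x.
Proof. intros Hx. pose proof (Int0_subgrad 1 x ltac:(lra) Hx). pose proof (Int0_nonneg 1 ltac:(lra)). lra. Qed.

Lemma Int0_le x y : 0 <= x -> x <= y -> Int0 f x <= Int0 f y.
Proof. intros Hx Hxy. pose proof (Int0_diff_bounds x y Hx Hxy). pose proof (f_nonneg x Hx). nra. Qed.

Lemma Int0_lt x y : 0 <= x -> x < y -> Int0 f x < Int0 f y.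
Proof. intros Hx Hxy. pose proof (Int0_diff_bounds_strict x y Hx Hxy). pose proof (f_nonneg x Hx). nra. Qed.

Lemma Int0_lipschitz x y M : 0 <= x <= M -> 0 <= y <= M ->
  Rabs (Int0 f y - Int0 f x) <= f M * Rabs (y - x).
Proof.
  intros. pose proof (f_le x M ltac:(lra) ltac:(lra)). pose proof (f_le y M ltac:(lra) ltac:(lra)).
  destruct (Rle_dec x y) as [Hxy|Hyx].
  - pose proof (Int0_diff_bounds x y ltac:(lra) Hxy). pose proof (f_nonneg x ltac:(lra)).
    rewrite !Rabs_right by nra. nra.
  - pose proof (Int0_diff_bounds y x ltac:(lra) ltac:(lra)). pose proof (f_nonneg y ltac:(lra)).
    rewrite Rabs_left1, Rabs_left1 by nra. nra.
Qed.

Variable N : nat.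

Lemma Lfun_subgrad r r' : Rp N r -> Rp N r' ->
  sumR (map (fun n => f (r n) * (r' n - r n)) (seq 0 N)) <= Lfun N f r' - Lfun N f r.
Proof.
  intros [Hr _] [Hr' _]. unfold Lfun. rewrite <- sumR_minus. apply sumR_le.
  intros n Hn. apply in_seq in Hn. apply Int0_subgrad; auto; [apply Hr|apply Hr']; lia.
Qed.

Lemma Lfun_subgrad_strict r r' : Rp N r -> Rp N r' -> r <> r' ->
  sumR (map (fun n => f (r n) * (r' n - r n)) (seq 0 N)) < Lfun N f r' - Lfun N f r.
Proof.
  intros Hr0 Hr'0 Hne. destruct (Rp_neq_coord N r r' Hr0 Hr'0 Hne) as [n0 [Hn0 Hne0]].
  destruct Hr0 as [Hr _], Hr'0 as [Hr' _]. unfold Lfun. rewrite <- sumR_minus.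
  apply sumR_lt with n0; [|apply in_seq; lia|apply Int0_subgrad_strict; auto].
  intros n Hn. apply in_seq in Hn. apply Int0_subgrad; auto; [apply Hr|apply Hr']; lia.
Qed.

Lemma Lfun_midpoint_lt r1 r2 : Rp N r1 -> Rp N r2 -> r1 <> r2 ->
  Lfun N f (midpoint r1 r2) < (Lfun N f r1 + Lfun N f r2) / 2.
Proof.
  intros H1 H2 Hne. pose proof (Rp_midpoint N _ _ H1 H2) as Hm.
  assert (Hm1 : midpoint r1 r2 <> r1).
  { intros He. apply Hne, (Rp_ext N r1 r2 H1 H2). intros n Hn.
    assert (midpoint r1 r2 n = r1 n) by (rewrite He; auto). unfold midpoint in *. lra. }
  pose proof (Lfun_subgrad_strict _ _ Hm H1 Hm1) as A1.
  pose proof (Lfun_subgrad _ _ Hm H2) as A2.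
  pose proof (Rplus_lt_le_compat _ _ _ _ A1 A2) as A.
  rewrite <- sumR_plus, (sumR_ext _ (fun _ => 0)), sumR_zero in A; [lra|].
  intros n _. unfold midpoint. lra.
Qed.

Lemma Lfun_nonneg r : Rp N r -> 0 <= Lfun N f r.
Proof.
  intros [H _]. apply sumR_nonneg. intros n Hn. apply in_seq in Hn.
  apply Int0_nonneg; auto. apply H; lia.
Qed.

Lemma Lfun_coord_bound r n : Rp N r -> (n < N)%nat -> f 1 * (r n - 1) <= Lfun N f r.
Proof.
  intros [H _] Hn. unfold Lfun.
  eapply Rle_trans; [apply Int0_ge_linear; auto|].
  apply (sumR_term_le (fun m => Int0 f (r m))); [|apply in_seq; lia].
  intros m Hm. apply in_seq in Hm. apply Int0_nonneg; auto. apply H; lia.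
Qed.

Lemma Lfun_lipschitz r r' M : Rp N r -> Rp N r' ->
  (forall n, (n < N)%nat -> r n <= M /\ r' n <= M) ->
  Rabs (Lfun N f r' - Lfun N f r) <= f M * sumR (map (fun n => Rabs (r' n - r n)) (seq 0 N)).
Proof.
  intros [H1 _] [H2 _] HM. unfold Lfun. rewrite <- sumR_minus, <- sumR_scal.
  eapply Rle_trans; [apply Rabs_sumR_le|]. apply sumR_le. intros n Hn. apply in_seq in Hn.
  destruct (HM n ltac:(lia)). apply Int0_lipschitz; auto; split; auto; [apply H1|apply H2]; lia.
Qed.

Lemma Lfun_lt r r' : Rp N r -> Rp N r' -> vle N r r' -> r <> r' -> Lfun N f r < Lfun N f r'.
Proof.
  intros Hr Hr' Hle Hne. destruct (Rp_neq_coord N r r' Hr Hr' Hne) as [n0 [Hn0 Hne0]].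
  destruct Hr as [Hr _]. unfold Lfun. apply sumR_lt with n0; [|apply in_seq; lia|].
  - intros n Hn. apply in_seq in Hn. apply Int0_le; auto; [apply Hr|apply Hle]; lia.
  - apply Int0_lt; auto. pose proof (Hle n0 Hn0). lra.
Qed.

Lemma Lfun_le r r' : Rp N r -> Rp N r' -> vle N r r' -> Lfun N f r <= Lfun N f r'.
Proof.
  intros. destruct (classic (r = r')) as [->|]; [lra|]. left. apply Lfun_lt; auto.
Qed.

Section Minimizer.
Variable K : (nat -> R) -> Prop.
Hypothesis HK_Rp : forall r, K r -> Rp N r.
Hypothesis HK_midpoint : forall r1 r2, K r1 -> K r2 -> K (midpoint r1 r2).
Hypothesis HK_closed : forall r, Rp N r ->
  (forall eps, 0 < eps -> exists r', K r' /\ forall n, (n < N)%nat -> Rabs (r n - r' n) < eps) ->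
  K r.

Lemma Lfun_infimum r0 : K r0 -> exists m, (forall r, K r -> m <= Lfun N f r) /\
  forall eps, 0 < eps -> exists r, K r /\ Lfun N f r < m + eps.
Proof.
  intros Hr0. set (E := fun y => exists r, K r /\ y = - Lfun N f r).
  destruct (completeness E) as [l [Hub Hlub]].
  - exists 0. intros y [r [Hr ->]]. pose proof (Lfun_nonneg r (HK_Rp r Hr)). lra.
  - exists (- Lfun N f r0), r0. auto.
  - exists (- l). split.
    + intros r Hr. assert (E (- Lfun N f r)) as HE by (exists r; auto). apply Hub in HE. lra.
    + intros eps He. apply NNPP. intros Hc.
      assert (is_upper_bound E (l - eps)) as Hl.
      { intros y [r [Hr ->]]. apply Rnot_lt_le. intros Hlt. apply Hc. exists r. split; auto. lra. }
      apply Hlub in Hl. lra.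
Qed.

Lemma Lfun_sublevel_bounded r B n : Rp N r -> Lfun N f r <= B -> (n < N)%nat ->
  r n <= 1 + B / f 1.
Proof.
  intros Hr HB Hn. assert (Hf1 : 0 < f 1) by (rewrite <- Hf0; apply Hf_inc; lra).
  pose proof (Lfun_coord_bound r n Hr Hn).
  assert (r n - 1 <= B / f 1); [|lra].
  apply Rmult_le_reg_l with (f 1); auto. field_simplify; lra.
Qed.

Lemma Lfun_continuous r M : Rp N r -> 0 <= M -> (forall n, (n < N)%nat -> r n <= M) ->
  forall eps, 0 < eps -> exists delta, 0 < delta /\ forall r', Rp N r' ->
    (forall n, (n < N)%nat -> r' n <= M /\ Rabs (r' n - r n) < delta) ->
    Rabs (Lfun N f r' - Lfun N f r) < eps.
Proof.
  intros Hr HM HrM eps He.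
  pose proof (f_nonneg M HM) as HfM. pose proof (pos_INR N).
  set (c := f M * INR N + 1).
  assert (Hc : 0 < c) by (unfold c; pose proof (Rmult_le_pos _ _ HfM (pos_INR N)); lra).
  exists (eps / c). split; [apply Rdiv_lt_0_compat; auto|]. intros r' Hr' Hclose.
  assert (Hsum : sumR (map (fun n => Rabs (r' n - r n)) (seq 0 N)) <= INR N * (eps / c)).
  { rewrite <- (length_seq N 0) at 2. rewrite <- sumR_const. apply sumR_le.
    intros n Hn. apply in_seq in Hn. left. apply Hclose. lia. }
  eapply Rle_lt_trans.
  { apply (Lfun_lipschitz r r' M Hr Hr').
    intros n Hn. split; [apply HrM|apply Hclose]; auto. }
  apply Rle_lt_trans with (f M * (INR N * (eps / c))); [apply Rmult_le_compat_l; auto|].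
  assert (Hd : 0 < eps / c) by (apply Rdiv_lt_0_compat; auto).
  apply Rlt_le_trans with (c * (eps / c)); [|right; field; lra].
  set (d := eps / c) in *. unfold c. lra.
Qed.

Lemma unique_min_of_min r : K r -> (forall r', K r' -> Lfun N f r <= Lfun N f r') ->
  unique_min K (Lfun N f) r.
Proof.
  intros Hr Hmin. split; auto. intros r' Hr' Hne.
  destruct (Rle_lt_or_eq_dec _ _ (Hmin r' Hr')) as [|Heq]; auto. exfalso.
  pose proof (Hmin _ (HK_midpoint r r' Hr Hr')).
  pose proof (Lfun_midpoint_lt r r' (HK_Rp r Hr) (HK_Rp r' Hr') (not_eq_sym Hne)).
  lra.
Qed.

Lemma Lfun_limit_le (v : nat -> nat -> R) r m M : Rp N r -> (forall k, Rp N (v k)) ->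
  (forall k n, v k n <= M) -> 0 <= M -> (forall n, (n < N)%nat -> r n <= M) ->
  (forall n, (n < N)%nat -> Un_cv (fun k => v k n) (r n)) ->
  (forall eps, 0 < eps -> exists k0, forall k, (k0 <= k)%nat -> Lfun N f (v k) < m + eps) ->
  Lfun N f r <= m.
Proof.
  intros Hr Hv HvM HM HrM Hcv Hmin. apply Rnot_lt_le. intros Hlt.
  set (eps := (Lfun N f r - m) / 2). assert (He : 0 < eps) by (unfold eps; lra).
  destruct (Lfun_continuous r M Hr HM HrM eps He) as [delta [Hdelta Hcont]].
  destruct (Un_cv_coords_uniform N v r Hcv delta Hdelta) as [k1 Hk1].
  destruct (Hmin eps He) as [k2 Hk2].
  set (k := Nat.max k1 k2).
  assert (Hclose : Rabs (Lfun N f (v k) - Lfun N f r) < eps).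
  { apply Hcont; auto. intros n Hn. split; auto. apply Hk1; auto; lia. }
  apply Rabs_def2 in Hclose. pose proof (Hk2 k ltac:(lia)). unfold eps in *. lra.
Qed.

(* Sublevel sets of [L] are bounded, so a minimizing sequence lies in a box. *)
Lemma Lfun_minimizing_sequence r0 : K r0 -> exists m (u : nat -> nat -> R) M,
  (forall r, K r -> m <= Lfun N f r) /\ 0 <= M /\ (forall k, K (u k)) /\
  (forall k n, 0 <= u k n <= M) /\ (forall k, Lfun N f (u k) < m + / (INR k + 1)).
Proof.
  intros Hr0. destruct (Lfun_infimum r0 Hr0) as [m [Hlow Happ]].
  assert (G : forall k : nat, {r | K r /\ Lfun N f r < m + / (INR k + 1)}).
  { intros k. apply constructive_indefinite_description, Happ.
    apply Rinv_0_lt_compat. pose proof (pos_INR k). lra. }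
  set (M := 1 + (Lfun N f r0 + 1) / f 1).
  assert (HM : 1 <= M).
  { assert (0 < f 1) by (rewrite <- Hf0; apply Hf_inc; lra).
    pose proof (Lfun_nonneg r0 (HK_Rp r0 Hr0)).
    assert (0 < (Lfun N f r0 + 1) / f 1) by (apply Rdiv_lt_0_compat; lra). unfold M. lra. }
  exists m, (fun k => proj1_sig (G k)), M.
  split; [auto|split; [lra|split; [intros k; apply (proj2_sig (G k))|split]]];
    [|intros k; apply (proj2_sig (G k))].
  intros k n. destruct (proj2_sig (G k)) as [Huk HLk]. destruct (HK_Rp _ Huk) as [Hp Hz].
  destruct (Nat.lt_ge_cases n N) as [Hn|Hn]; [|rewrite Hz by auto; lra].
  split; [apply Hp; auto|]. apply Lfun_sublevel_bounded; auto.
  pose proof (Hlow r0 Hr0). assert (/ (INR k + 1) <= 1); [|lra].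
  rewrite <- Rinv_1. apply Rinv_le_contravar; [lra|]. pose proof (pos_INR k). lra.
Qed.

(* A subsequence of a minimizing sequence converges coordinatewise; its limit lies in
   the closed set [K] and, by continuity of [L], attains the infimum. *)
Theorem Lfun_unique_min_exists : (exists r, K r) -> exists r, unique_min K (Lfun N f) r.
Proof.
  intros [r0 Hr0].
  destruct (Lfun_minimizing_sequence r0 Hr0) as [m [u [M [Hlow [HM [HuK [Hbox Hu]]]]]]].
  destruct (Un_cv_coords_subseq u M Hbox N) as [phi [lim [Hphi Hcv]]].
  set (rs := fun n => if Nat.ltb n N then lim n else 0).
  assert (Hrs : forall n, (n < N)%nat -> rs n = lim n).
  { intros n Hn. unfold rs. destruct (Nat.ltb_spec n N); [auto|lia]. }
  assert (Hrs_box : forall n, (n < N)%nat -> 0 <= rs n <= M).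
  { intros n Hn. rewrite Hrs by auto. apply (Un_cv_bounds _ _ _ _ (Hcv n Hn)). intros k. apply Hbox. }
  assert (HRs : Rp N rs).
  { split; intros n Hn; [apply Hrs_box; auto|]. unfold rs. destruct (Nat.ltb_spec n N); [lia|auto]. }
  assert (Hcv' : forall n, (n < N)%nat -> Un_cv (fun k => u (phi k) n) (rs n)).
  { intros n Hn. rewrite Hrs; auto. }
  assert (HKrs : K rs).
  { apply HK_closed; auto. intros eps He.
    destruct (Un_cv_coords_uniform N _ rs Hcv' eps He) as [k Hk].
    exists (u (phi k)). split; auto. intros n Hn. rewrite Rabs_minus_sym. apply Hk; auto. }
  exists rs. apply unique_min_of_min; auto. intros r' Hr'. apply Rle_trans with m; auto.
  apply (Lfun_limit_le (fun k => u (phi k)) rs m M HRs); auto.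
  - intros k n. apply Hbox.
  - intros n Hn. apply Hrs_box; auto.
  - intros eps He. destruct (inv_INR_lt eps He) as [k0 Hk0]. exists k0. intros k Hk.
    pose proof (strict_incr_ge phi Hphi k). pose proof (Hk0 (phi k) ltac:(lia)).
    pose proof (Hu (phi k)). lra.
Qed.
End Minimizer.
End Objective.

(** * Extreme points of [P] *)

Lemma convex_comb_eq_bound (x y c t : R) : x <= c -> y <= c -> 0 < t < 1 ->
  t * x + (1 - t) * y = c -> x = c /\ y = c.
Proof.
  intros. assert (0 <= t * (c - x)) by (apply Rmult_le_pos; lra).
  assert (0 <= (1 - t) * (c - y)) by (apply Rmult_le_pos; lra).
  assert (Hx : t * (c - x) = 0) by nra. assert (Hy : (1 - t) * (c - y) = 0) by nra.
  apply Rmult_integral in Hx, Hy. lra.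
Qed.

Section Polytope.
Variable N : nat.
Variable S : list (nat -> R).

(* The polytope [in_P N S] as a finite list of constraints [c . x <= b]; the sign
   constraint [0 <= x n] is written [-x n <= 0]. *)
Definition sign_row (n : nat) : nat -> R := fun m => if Nat.eqb m n then -1 else 0.

Definition constraints : list ((nat -> R) * R) :=
  map (fun n => (sign_row n, 0)) (seq 0 N) ++ map (fun p => (p, 1)) S.

Lemma dot_sign_row n x : (n < N)%nat -> dot N (sign_row n) x = - x n.
Proof. intros Hn. unfold sign_row. rewrite dot_coord_l; auto. lra. Qed.

Lemma sign_row_in_constraints n : (n < N)%nat -> In (sign_row n, 0) constraints.
Proof. intros. apply in_or_app. left. apply in_map_iff. exists n. split; auto. apply in_seq. lia. Qed.

Lemma S_in_constraints p : In p S -> In (p, 1) constraints.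
Proof. intros. apply in_or_app. right. apply in_map_iff. exists p. auto. Qed.

Lemma in_P_constraints x : in_P N S x -> forall c, In c constraints -> dot N (fst c) x <= snd c.
Proof.
  intros [[Hx _] HxS] c Hc. apply in_app_or in Hc.
  destruct Hc as [Hc|Hc]; apply in_map_iff in Hc; destruct Hc as [y [<- Hy]]; simpl.
  - apply in_seq in Hy. rewrite dot_sign_row by lia. pose proof (Hx y ltac:(lia)). lra.
  - rewrite dot_comm. auto.
Qed.

Lemma constraints_in_P x : (forall n, (N <= n)%nat -> x n = 0) ->
  (forall c, In c constraints -> dot N (fst c) x <= snd c) -> in_P N S x.
Proof.
  intros Hx Hc. split; [split; auto|].
  - intros n Hn. pose proof (Hc _ (sign_row_in_constraints n Hn)) as H. simpl in H.
    rewrite dot_sign_row in H; auto. lra.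
  - intros p Hp. pose proof (Hc _ (S_in_constraints p Hp)) as H. simpl in H. rewrite dot_comm. auto.
Qed.

Lemma active_convex_comb x a b t c : in_P N S a -> in_P N S b -> 0 < t < 1 ->
  (forall n, x n = t * a n + (1 - t) * b n) -> In c constraints -> dot N (fst c) x = snd c ->
  dot N (fst c) a = snd c /\ dot N (fst c) b = snd c.
Proof.
  intros Ha Hb Ht Hx Hc Hact. apply convex_comb_eq_bound with t; auto.
  - apply (in_P_constraints a Ha c Hc).
  - apply (in_P_constraints b Hb c Hc).
  - rewrite <- dot_linear_r, <- Hact. apply dot_ext. intros. rewrite Hx. auto.
Qed.

Definition active (x : nat -> R) (c : (nat -> R) * R) : bool :=
  if Req_EM_T (dot N (fst c) x) (snd c) then true else false.

Lemma active_true x c : active x c = true <-> dot N (fst c) x = snd c.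
Proof. unfold active. destruct (Req_EM_T _ _); split; intros; auto; congruence. Qed.

Lemma active_false x c : active x c = false <-> dot N (fst c) x <> snd c.
Proof. unfold active. destruct (Req_EM_T _ _); split; intros; auto; congruence. Qed.

Definition pattern (x : nat -> R) : list bool := map (active x) constraints.

(* If [x] and [y] have the same active constraints, [x] is a proper convex combination
   of [y] and the point [x + s (x - y)], which stays in [P] for small [s > 0]. *)
Lemma in_E_pattern_inj x y : in_E N S x -> in_E N S y -> pattern x = pattern y -> x = y.
Proof.
  intros [Hx Hxe] [Hy _] Hp.
  pose proof (proj1 map_ext_in_iff Hp) as Hpc.
  destruct (exists_pos_scale_le constraints (fun c => dot N (fst c) x - dot N (fst c) y)
              (fun c => snd c - dot N (fst c) x)) as [s [Hs Hss]].
  set (a := fun n => x n + s * (x n - y n)).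
  assert (Ha : in_P N S a).
  { apply constraints_in_P.
    - intros n Hn. unfold a. rewrite (proj2 (proj1 Hx)), (proj2 (proj1 Hy)); auto. lra.
    - intros c Hc. unfold a. rewrite dot_plus_scal_r, dot_minus_r.
      destruct (active x c) eqn:E.
      + pose proof E as E'. rewrite Hpc in E' by auto. apply active_true in E, E'. rewrite E, E'. lra.
      + apply active_false in E. pose proof (in_P_constraints x Hx c Hc).
        apply Hss in Hc; lra. }
  assert (Hay : a = y).
  { apply (Hxe a y (1 / (1 + s))); auto.
    - split; [apply Rdiv_lt_0_compat; lra|].
      apply Rmult_lt_reg_l with (1 + s); [lra|]. field_simplify; lra.
    - intros n. unfold a. field. lra. }
  apply functional_extensionality. intros n.
  assert (a n = y n) by (rewrite Hay; auto). unfold a in *.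
  assert (Hz : (1 + s) * (x n - y n) = 0) by lra. apply Rmult_integral in Hz. lra.
Qed.

Definition free_coord (n : nat) : Prop := forall p, In p S -> p n = 0.

(* Along a free coordinate [P] is unbounded, so an extreme point cannot move there. *)
Lemma in_E_free_coord x n : in_E N S x -> (n < N)%nat -> free_coord n -> x n = 0.
Proof.
  intros [Hx Hxe] Hn Hf. apply NNPP. intros Hne.
  set (s := x n). set (en := fun m => if Nat.eqb m n then 1 else 0).
  assert (Hs : 0 < s) by (pose proof (proj1 (proj1 Hx) n Hn); unfold s; lra).
  assert (HP : forall s', - s <= s' -> in_P N S (fun m => x m + s' * en m)).
  { intros s' Hs'. split; [split|].
    - intros m Hm. unfold en. destruct (Nat.eqb_spec m n) as [->|]; [unfold s in *; lra|].
      pose proof (proj1 (proj1 Hx) m Hm). lra.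
    - intros m Hm. unfold en. destruct (Nat.eqb_spec m n); [lia|]. rewrite (proj2 (proj1 Hx)); auto. lra.
    - intros p Hp. rewrite dot_comm, dot_plus_scal_r, (dot_comm N p x), (dot_comm N p en).
      unfold en. rewrite dot_coord_l, (Hf p Hp); auto. pose proof (proj2 Hx p Hp). lra. }
  assert (Heq : (fun m => x m + s * en m) = (fun m => x m + - s * en m)).
  { apply (Hxe _ _ (1/2)); [apply HP; lra|apply HP; lra|lra|]. intros m. lra. }
  apply (f_equal (fun v => v n)) in Heq. unfold en in Heq. rewrite Nat.eqb_refl in Heq. lra.
Qed.

(* Termination measure for climbing in [E]: there are finitely many activity patterns,
   and distinct extreme points have distinct ones. *)
Definition n_patterns_above (x : nat -> R) : nat :=
  length (filter (fun p => bool_of_prop (exists y, in_E N S y /\ vle N x y /\ pattern y = p))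
    (bool_lists (length constraints))).

Lemma n_patterns_above_lt x y : in_E N S x -> in_E N S y -> vle N x y -> y <> x ->
  (n_patterns_above y < n_patterns_above x)%nat.
Proof.
  intros Hx Hy Hxy Hne. apply length_filter_lt with (pattern x).
  - intros p _ Hp. cbv beta in *.
    apply (proj1 (bool_of_prop_true _)) in Hp. apply (proj2 (bool_of_prop_true _)).
    destruct Hp as [z [Hz [Hyz Hpz]]]. exists z. split; [|split]; eauto using vle_trans.
  - unfold pattern. rewrite <- (length_map (active x) constraints). apply in_bool_lists.
  - cbv beta. apply bool_of_prop_true. exists x. split; [|split]; auto using vle_refl.
  - cbv beta. apply bool_of_prop_false. intros [z [Hz [Hyz Hpz]]].
    pose proof (in_E_pattern_inj z x Hz Hx Hpz) as ->.
    apply Hne, (Rp_ext N y x (proj1 (proj1 Hy)) (proj1 (proj1 Hx))).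
    intros n Hn. specialize (Hxy n Hn). specialize (Hyz n Hn). lra.
Qed.

Lemma in_E_le_Sstar x : in_E N S x -> exists x', in_Sstar N S x' /\ vle N x x'.
Proof.
  remember (n_patterns_above x) as k eqn:Hk. revert x Hk.
  induction k as [k IH] using Wf_nat.lt_wf_ind. intros x Hk Hx.
  destruct (classic (forall y, in_E N S y -> vle N x y -> y = x)) as [Hmax|Hnmax].
  - exists x. split; [split; auto|apply vle_refl].
  - apply not_all_ex_not in Hnmax as [y Hy].
    apply imply_to_and in Hy as [Hy Hy']. apply imply_to_and in Hy' as [Hxy Hne].
    destruct (IH (n_patterns_above y)) with (x := y) as [x' [Hx' Hyx']]; auto.
    { subst k. apply n_patterns_above_lt; auto. }
    exists x'. split; eauto using vle_trans.
Qed.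
End Polytope.

Lemma in_P_le N S x y : Forall (Rp N) S -> in_P N S x -> Rp N y -> vle N y x -> in_P N S y.
Proof.
  intros HS [_ HxS] Hy Hyx. split; auto. intros p Hp. eapply Rle_trans; [|apply (HxS p Hp)].
  rewrite !(dot_comm N _ p). apply dot_le. intros n Hn.
  rewrite Forall_forall in HS. apply Rmult_le_compat_l; auto. apply (HS p Hp); auto.
Qed.

(** * Minimizing a linear map over a face of [P] *)

Section Face.
Variable N : nat.
Variable S : list (nat -> R).
Hypothesis HS : Forall (Rp N) S.
Variable lam : nat -> R.
Hypothesis Hlam1 : forall x, in_P N S x -> dot N x lam <= 1.

Definition zero_on_free (x : nat -> R) : Prop :=
  forall n, (n < N)%nat -> free_coord S n -> x n = 0.

Definition n_inactive (x : nat -> R) : nat :=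
  length (filter (fun c => negb (active N x c)) (constraints N S)).

(* Off the free coordinates [P] is bounded: every nonzero direction is blocked. *)
Lemma exists_blocking_constraint e : zero_on_free e -> (exists m, (m < N)%nat /\ e m <> 0) ->
  exists c, In c (constraints N S) /\ 0 < dot N (fst c) e.
Proof.
  intros Hze [m [Hm Hem]].
  destruct (classic (exists k, (k < N)%nat /\ e k < 0)) as [[k [Hk Hek]]|Hno].
  - exists (sign_row k, 0). split; [apply sign_row_in_constraints; auto|].
    simpl. rewrite dot_sign_row; auto. lra.
  - assert (Hnn : forall k, (k < N)%nat -> 0 <= e k).
    { intros k Hk. apply Rnot_lt_le. intros Hlt. apply Hno. eauto. }
    assert (Hpos : 0 < e m) by (pose proof (Hnn m Hm); lra).
    destruct (classic (free_coord S m)) as [Hf|Hnf]; [pose proof (Hze m Hm Hf); lra|].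
    apply not_all_ex_not in Hnf as [p Hp]. apply imply_to_and in Hp as [Hp Hpm].
    assert (HRp : Rp N p) by (rewrite Forall_forall in HS; auto).
    assert (0 < p m) by (pose proof (proj1 HRp m Hm); lra).
    exists (p, 1). split; [apply S_in_constraints; auto|]. simpl.
    eapply Rlt_le_trans; [|apply (sumR_term_le (fun n => p n * e n) (seq 0 N) m)].
    + apply Rmult_lt_0_compat; auto.
    + intros n Hn. apply in_seq in Hn. apply Rmult_le_pos; [apply (proj1 HRp)|apply Hnn]; lia.
    + apply in_seq. lia.
Qed.

(* Moving from [x] along [e] until the first constraint becomes active. *)
Lemma face_descent_step w x e : in_P N S x -> dot N x lam = 1 -> zero_on_free x ->
  (forall c, In c (constraints N S) -> active N x c = true -> dot N (fst c) e = 0) ->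
  dot N lam e = 0 -> (exists m, (m < N)%nat /\ e m <> 0) -> dot N w e <= 0 ->
  (forall n, (N <= n)%nat -> e n = 0) ->
  exists x', in_P N S x' /\ dot N x' lam = 1 /\ zero_on_free x' /\
    dot N w x' <= dot N w x /\ (n_inactive x' < n_inactive x)%nat.
Proof.
  intros Hx Hxl Hz He_act He_lam He_nz He_w He_out.
  assert (Hze : zero_on_free e).
  { intros n Hn Hf. pose proof (Hz n Hn Hf).
    assert (Hact : active N x (sign_row n, 0) = true)
      by (apply active_true; simpl; rewrite dot_sign_row; auto; lra).
    pose proof (He_act _ (sign_row_in_constraints N S n Hn) Hact) as Hen. simpl in Hen.
    rewrite dot_sign_row in Hen; auto. lra. }
  set (g := fun c : (nat -> R) * R => (snd c - dot N (fst c) x) / dot N (fst c) e).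
  destruct (list_argmin (constraints N S) (fun c => 0 < dot N (fst c) e) g
              (exists_blocking_constraint e Hze He_nz)) as [c0 [Hc0 [Hc0e Hmin]]].
  assert (Hslack : forall c, In c (constraints N S) -> 0 < dot N (fst c) e -> dot N (fst c) x < snd c).
  { intros c Hc Hce. destruct (in_P_constraints N S x Hx c Hc) as [|Heq]; auto.
    pose proof (He_act c Hc (proj2 (active_true N x c) Heq)). lra. }
  set (s := g c0).
  assert (Hs : 0 < s) by (apply Rdiv_lt_0_compat; auto; pose proof (Hslack c0 Hc0 Hc0e); lra).
  exists (fun n => x n + s * e n). split; [|split; [|split; [|split]]].
  - apply constraints_in_P.
    + intros n Hn. rewrite (proj2 (proj1 Hx)), He_out; auto. lra.
    + intros c Hc. rewrite dot_plus_scal_r. pose proof (in_P_constraints N S x Hx c Hc).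
      destruct (Rlt_dec 0 (dot N (fst c) e)) as [Hce|Hce]; [|apply Rnot_lt_le in Hce; nra].
      assert (Hgc : g c * dot N (fst c) e = snd c - dot N (fst c) x) by (unfold g; field; lra).
      pose proof (Rmult_le_compat_r _ _ _ (Rlt_le _ _ Hce) (Hmin c Hc Hce)). unfold s. lra.
  - rewrite dot_comm, dot_plus_scal_r, (dot_comm N lam x), Hxl, He_lam. lra.
  - intros n Hn Hf. rewrite (Hz n Hn Hf), (Hze n Hn Hf). lra.
  - rewrite dot_plus_scal_r. nra.
  - apply length_filter_lt with c0; auto.
    + intros c Hc. destruct (active N x c) eqn:Ea; simpl; auto. intros Hna.
      apply negb_true_iff, active_false in Hna. exfalso. apply Hna.
      rewrite dot_plus_scal_r, (He_act c Hc Ea). apply active_true in Ea. lra.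
    + apply negb_true_iff, active_false. pose proof (Hslack c0 Hc0 Hc0e). lra.
    + apply negb_false_iff, active_true. rewrite dot_plus_scal_r. unfold s, g. field. lra.
Qed.

(* A point of the face that is not extreme lies inside a segment [a, b] of the face;
   [a - b] or [b - a] keeps the active constraints and does not increase [w]. *)
Lemma face_nonvertex_step w x : in_P N S x -> dot N x lam = 1 -> zero_on_free x -> ~ in_E N S x ->
  exists x', in_P N S x' /\ dot N x' lam = 1 /\ zero_on_free x' /\
    dot N w x' <= dot N w x /\ (n_inactive x' < n_inactive x)%nat.
Proof.
  intros Hx Hxl Hz HnE.
  assert (exists a b t, in_P N S a /\ in_P N S b /\ 0 < t < 1 /\
            (forall n, x n = t * a n + (1 - t) * b n) /\ a <> b)
    as [a [b [t [Ha [Hb [Ht [Hxab Hne]]]]]]].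
  { apply NNPP. intros Hc. apply HnE. split; auto. intros a b t Ha Hb Ht Hxab.
    apply NNPP. intros Hne. apply Hc. exists a, b, t. auto. }
  set (d := fun n => a n - b n).
  assert (Hd_act : forall c, In c (constraints N S) -> active N x c = true -> dot N (fst c) d = 0).
  { intros c Hc Hact. apply active_true in Hact.
    destruct (active_convex_comb N S x a b t c Ha Hb Ht Hxab Hc Hact).
    unfold d. rewrite dot_minus_r. lra. }
  assert (Hd_lam : dot N lam d = 0).
  { assert (Hconv : t * dot N a lam + (1 - t) * dot N b lam = 1).
    { rewrite <- dot_linear_l. transitivity (dot N x lam); [|exact Hxl].
      apply dot_ext. intros. rewrite Hxab. auto. }
    destruct (convex_comb_eq_bound _ _ _ _ (Hlam1 a Ha) (Hlam1 b Hb) Ht Hconv).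
    unfold d. rewrite dot_minus_r, !(dot_comm N lam). lra. }
  destruct (Rp_neq_coord N a b (proj1 Ha) (proj1 Hb) Hne) as [m [Hm Hab]].
  set (sg := if Rle_dec (dot N w d) 0 then 1 else -1).
  apply (face_descent_step w x (fun n => sg * d n)); auto.
  - intros c Hc Hact. rewrite dot_scal_r, (Hd_act c Hc Hact). lra.
  - rewrite dot_scal_r, Hd_lam. lra.
  - exists m. split; auto. unfold d, sg. destruct (Rle_dec _ _); intros Hc; apply Hab; lra.
  - rewrite dot_scal_r. unfold sg. destruct (Rle_dec _ _); lra.
  - intros n Hn. unfold d. rewrite (proj2 (proj1 Ha)), (proj2 (proj1 Hb)); auto. lra.
Qed.

Lemma face_vertex_le w x : in_P N S x -> dot N x lam = 1 -> zero_on_free x ->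
  exists v, in_E N S v /\ dot N v lam = 1 /\ dot N w v <= dot N w x.
Proof.
  remember (n_inactive x) as k eqn:Hk. revert x Hk.
  induction k as [k IH] using Wf_nat.lt_wf_ind. intros x Hk Hx Hxl Hz.
  destruct (classic (in_E N S x)) as [HE|HnE]; [exists x; split; [|split]; auto; lra|].
  destruct (face_nonvertex_step w x Hx Hxl Hz HnE) as [x' [Hx' [Hx'l [Hz' [Hw Hlt]]]]].
  destruct (IH (n_inactive x')) with (x := x') as [v [Hv [Hvl Hvw]]]; auto; [lia|].
  exists v. split; [|split]; auto. lra.
Qed.
End Face.

(** * The lifting problem *)

Lemma map_fst_combine {A B} (l : list A) (l' : list B) :
  length l = length l' -> map fst (combine l l') = l.
Proof. revert l'. induction l; intros [|b l']; simpl; intros; try lia; auto. rewrite IHl; auto. Qed.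

(* [x . lam <= x . sigma], and [sigma] is a convex combination of points [p] with [x . p <= 1]. *)
Lemma in_Lambda_dot_le_1 N S lam : in_Lambda N S lam -> forall x, in_P N S x -> dot N x lam <= 1.
Proof.
  intros [_ [sg [[al [Hlen [Hnn [Hsum Hsg]]]] Hle]]] x [[Hx _] HxS].
  apply Rle_trans with (dot N x sg); [apply dot_le; intros n Hn; apply Rmult_le_compat_l; auto|].
  rewrite (dot_ext N x sg x (fun n => sumR (map (fun p => fst p * snd p n) (combine al S))))
    by (intros n Hn; rewrite Hsg; auto).
  rewrite dot_sumR_r, <- Hsum. rewrite <- (map_fst_combine al S Hlen) at 2.
  apply sumR_le. intros [a pi] Hp. simpl.
  apply in_combine_l in Hp as Ha. apply in_combine_r in Hp as Hpi.
  rewrite Forall_forall in Hnn. pose proof (Hnn a Ha). pose proof (HxS pi Hpi).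
  rewrite <- (Rmult_1_r a) at 2. apply Rmult_le_compat_l; auto.
Qed.

Section Lifting.
Variables (N : nat) (S : list (nat -> R)) (lam q : nat -> R).

Lemma lift_feas_midpoint r1 r2 :
  lift_feas N S lam q r1 -> lift_feas N S lam q r2 -> lift_feas N S lam q (midpoint r1 r2).
Proof.
  intros [H1 [H1x H1q]] [H2 [H2x H2q]]. split; [apply Rp_midpoint; auto|split].
  - intros xi Hxi. specialize (H1x xi Hxi). specialize (H2x xi Hxi).
    rewrite (dot_ext N xi _ xi (fun n => (1/2) * r1 n + (1/2) * r2 n))
      by (intros; unfold midpoint; field).
    rewrite dot_linear_r. lra.
  - intros n Hn Hl. specialize (H1q n Hn Hl). specialize (H2q n Hn Hl). unfold midpoint. lra.
Qed.

Lemma lift_feas_closed r : Rp N r ->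
  (forall eps, 0 < eps -> exists r', lift_feas N S lam q r' /\
     forall n, (n < N)%nat -> Rabs (r n - r' n) < eps) ->
  lift_feas N S lam q r.
Proof.
  intros Hr Happ. split; auto. split.
  - intros xi Hxi. apply Rnot_lt_ge. intros Hlt.
    set (C := sumR (map (fun n => Rabs (xi n)) (seq 0 N)) + 1).
    assert (HC : 1 <= C).
    { pose proof (sumR_nonneg (fun n => Rabs (xi n)) (seq 0 N) (fun n _ => Rabs_pos (xi n))).
      unfold C. lra. }
    set (del := dot N xi q - dot N xi r).
    destruct (Happ (del / C) ltac:(apply Rdiv_lt_0_compat; unfold del; lra))
      as [r' [[_ [Hr'x _]] Hclose]].
    pose proof (Rabs_dot_le N xi (fun n => r n - r' n) (del / C) Hclose) as Hb.
    replace (sumR _) with (C - 1) in Hb by (unfold C; ring). rewrite dot_minus_r in Hb.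
    pose proof (Rle_abs (- (dot N xi r - dot N xi r'))) as Habs. rewrite Rabs_Ropp in Habs.
    assert ((C - 1) * (del / C) < del).
    { apply Rmult_lt_reg_l with C; [lra|]. field_simplify; [|lra]. unfold del in *. nra. }
    specialize (Hr'x xi Hxi). unfold del in *. lra.
  - intros n Hn Hl. apply Rnot_lt_le. intros Hlt.
    destruct (Happ (r n - q n) ltac:(lra)) as [r' [[_ [_ Hr'q]] Hclose]].
    specialize (Hr'q n Hn Hl). specialize (Hclose n Hn). apply Rabs_def2 in Hclose. lra.
Qed.

Lemma LiftDelta_spec (f : R -> R) :
  (forall x, 0 <= x -> derivable_pt f x) -> (forall x y, 0 <= x -> x < y -> f x < f y) ->
  f 0 = 0 -> Rp N q -> unique_min (lift_feas N S lam q) (Lfun N f) (LiftDelta N S f lam q).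
Proof.
  intros Hf_der Hf_inc Hf0 Hq. unfold LiftDelta. apply epsilon_spec.
  apply (Lfun_unique_min_exists f Hf_der Hf_inc Hf0 N).
  - intros r [Hr _]. exact Hr.
  - exact lift_feas_midpoint.
  - exact lift_feas_closed.
  - exists q. split; [|split]; auto; intros; lra.
Qed.

Section Constraints.
Hypothesis HS : Forall (Rp N) S.
Hypothesis Hlam : in_Lambda N S lam.

Lemma Xiplus_le_Xi xi : in_Xiplus N S lam xi -> exists xi', in_Xi N S lam xi' /\
  vle N xi xi' /\ forall n, (n < N)%nat -> xi' n <> xi n -> lam n = 0.
Proof.
  intros [HE Hxl]. destruct (in_E_le_Sstar N S xi HE) as [xi' [Hxi' Hle]].
  assert (Hlam_nn : forall n, (n < N)%nat -> 0 <= lam n) by apply (proj1 Hlam).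
  assert (Hxl' : dot N xi' lam = 1).
  { pose proof (in_Lambda_dot_le_1 N S lam Hlam xi' (proj1 (proj1 Hxi'))).
    assert (dot N xi lam <= dot N xi' lam); [|lra].
    rewrite !(dot_comm N _ lam). apply dot_le. intros n Hn.
    apply Rmult_le_compat_l; auto. }
  exists xi'. split; [split; auto|split; auto]. intros n Hn Hne.
  assert (Hz : sumR (map (fun m => (xi' m - xi m) * lam m) (seq 0 N)) = 0).
  { unfold dot in Hxl, Hxl'. rewrite (sumR_ext _ (fun m => xi' m * lam m - xi m * lam m))
      by (intros; ring). rewrite sumR_minus. lra. }
  assert (Hn0 : (xi' n - xi n) * lam n = 0).
  { apply (sumR_eq0_nonneg (fun m => (xi' m - xi m) * lam m) (seq 0 N)); auto; [|apply in_seq; lia].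
    intros m Hm. apply in_seq in Hm. pose proof (Hle m ltac:(lia)).
    apply Rmult_le_pos; [lra|apply Hlam_nn; lia]. }
  apply Rmult_integral in Hn0 as [|]; [lra|auto].
Qed.

Lemma lift_feas_plus_feas r : lift_feas N S lam q r -> plus_feas N S lam q r.
Proof.
  intros [Hr [Hrxi Hrq]]. split; auto. intros xi Hxi.
  destruct (Xiplus_le_Xi xi Hxi) as [xi' [Hxi' [Hle Hdiff]]].
  pose proof (Hrxi xi' Hxi').
  assert (Hcorr : 0 <= sumR (map (fun n => (xi' n - xi n) * (q n - r n)) (seq 0 N))).
  { apply sumR_nonneg. intros n Hn. apply in_seq in Hn. pose proof (Hle n ltac:(lia)).
    destruct (Req_dec (xi' n) (xi n)) as [->|Hne]; [lra|].
    pose proof (Hrq n ltac:(lia) (Hdiff n ltac:(lia) Hne)). apply Rmult_le_pos; lra. }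
  assert (dot N xi r - dot N xi q = (dot N xi' r - dot N xi' q) +
            sumR (map (fun n => (xi' n - xi n) * (q n - r n)) (seq 0 N))); [|lra].
  unfold dot. rewrite <- !sumR_minus, <- sumR_plus. apply sumR_ext. intros; ring.
Qed.

Lemma in_E_zero_out_face (T : nat -> bool) xi : in_E N S xi -> dot N xi lam = 1 ->
  (forall n, (n < N)%nat -> T n = true -> lam n = 0) ->
  let xt := fun n => if T n then 0 else xi n in
  in_P N S xt /\ dot N xt lam = 1 /\ zero_on_free N S xt.
Proof.
  intros HE Hxl HT xt. destruct (proj1 (proj1 HE)) as [Hxi_nn Hxi_out].
  split; [|split].
  - apply (in_P_le N S xi xt HS (proj1 HE)).
    + split; intros n Hn; unfold xt; destruct (T n); auto; lra.
    + intros n Hn. pose proof (Hxi_nn n Hn). unfold xt. destruct (T n); lra.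
  - rewrite <- Hxl. apply dot_ext. intros n Hn. unfold xt.
    destruct (T n) eqn:E; [rewrite (HT n Hn E)|]; ring.
  - intros n Hn Hf. unfold xt. destruct (T n); auto. apply (in_E_free_coord N S xi); auto.
Qed.

Lemma lift_feas_below_plus_feas r : Rp N q -> plus_feas N S lam q r ->
  exists r', lift_feas N S lam q r' /\ vle N r' r.
Proof.
  intros Hq [Hr Hrxi].
  set (T := fun n => bool_of_prop ((n < N)%nat /\ lam n = 0 /\ q n < r n)).
  assert (HT : forall n, T n = true -> (n < N)%nat /\ lam n = 0 /\ q n < r n)
    by (intros n; apply bool_of_prop_true).
  set (r' := fun n => if T n then q n else r n).
  assert (Hr' : Rp N r').
  { split; intros n Hn; unfold r'; destruct (T n) eqn:E.
    - apply (proj1 Hq); auto.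
    - apply (proj1 Hr); auto.
    - destruct (HT n E); lia.
    - apply (proj2 Hr); auto. }
  exists r'. split; [split; [auto|split]|].
  - intros xi [[HE _] Hxl].
    destruct (in_E_zero_out_face T xi HE Hxl) as [Hxt [Hxtl Hxtz]];
      [intros n _ E; apply (HT n E)|].
    set (xt := fun n => if T n then 0 else xi n) in *.
    destruct (face_vertex_le N S HS lam (in_Lambda_dot_le_1 N S lam Hlam) (fun n => r n - q n)
                xt Hxt Hxtl Hxtz) as [v [Hv [Hvl Hvw]]].
    pose proof (Hrxi v (conj Hv Hvl)).
    rewrite (dot_comm N _ v), (dot_comm N _ xt), !dot_minus_r in Hvw.
    assert (dot N xi r' - dot N xi q = dot N xt r - dot N xt q); [|lra].
    unfold dot. rewrite <- !sumR_minus. apply sumR_ext. intros n _. unfold r', xt. destruct (T n); ring.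
  - intros n Hn Hl. unfold r'. destruct (T n) eqn:E; [lra|].
    apply Rnot_lt_le. intros Hlt. apply bool_of_prop_false in E. auto.
  - intros n Hn. unfold r'. destruct (T n) eqn:E; [destruct (HT n E) as [_ [_ ?]]|]; lra.
Qed.
End Constraints.
End Lifting.

Theorem lemma5p6 (Nq : nat) (S : list (nat -> R)) (f : R -> R)
  (HS : Forall (Rp Nq) S)
  (Hf_der : forall x, 0 <= x -> derivable_pt f x)
  (Hf_inc : forall x y, 0 <= x -> x < y -> f x < f y)
  (Hf0 : f 0 = 0)
  (lam : nat -> R) (Hlam : in_Lambda Nq S lam)
  (q : nat -> R) (Hq : Rp Nq q) :
  unique_min (plus_feas Nq S lam q) (Lfun Nq f) (LiftDelta Nq S f lam q).
Proof.
  destruct (LiftDelta_spec Nq S lam q f Hf_der Hf_inc Hf0 Hq) as [HD HDmin].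
  set (D := LiftDelta Nq S f lam q) in *.
  split; [apply lift_feas_plus_feas; auto|].
  intros r Hr Hne.
  destruct (lift_feas_below_plus_feas Nq S lam q HS Hlam r Hq Hr) as [r' [Hr' Hle]].
  assert (Hr'r : Lfun Nq f r' <= Lfun Nq f r)
    by (apply (Lfun_le f Hf_der Hf_inc Hf0); auto; [apply Hr'|apply Hr]).
  destruct (classic (r' = D)) as [->|Hr'D].
  - apply (Lfun_lt f Hf_der Hf_inc Hf0); auto; [apply HD|apply Hr].
  - pose proof (HDmin r' Hr' Hr'D). lra.
Qed.
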